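(* In the setting of the addition algorithm, for every $\varphi\in\mathbb{R}^V$ with $M(\varphi)\le L(\tau,\varepsilon)$, $$\sqrt{J^+(\varphi)J^-(\varphi)}\ge\exp\Big(-\frac{1}{\varepsilon^2}\sum_{v\in V}\tau'\big(v,1+\max_{w\sim v}r(\varphi,w)\big)^2\Big).$$
   Context: Addition algorithm. Let $G=(V,E)$ be a finite connected graph ($v\sim w$ means $(v,w)\in E$), $\tau:V\to[0,\infty)$, $0<\varepsilon\le1/2$, and fix a total order $\preceq$ on $V$. Let $f:\mathbb{R}\to\mathbb{R}$ be $f(x)=0$ for $|x|\ge1$, $f(x)=(1+x)/\varepsilon$ on $[-1,-1+\varepsilon]$, $f(x)=1$ on $[-1+\varepsilon,1-\varepsilon]$, $f(x)=(1-x)/\varepsilon$ on $[1-\varepsilon,1]$. For $v\in V$, $h,t\in\mathbb{R}$ let $m_{v,h,t}(h')=\min(\tau(v)-t,\varepsilon/2)f(h'-h)+t$ if $\tau(v)\ge t$, and $m_{v,h,t}(h')=t$ if $\tau(v)<t$. On input $\varphi\in\mathbb{R}^V$ the algorithm outputs an ordering $P_1,\dots,P_{|V|}$ of $V$, numbers $s_k$ and functions $\tau_k:V\times\mathbb{R}\to\mathbb{R}$: set $\tau_1(v,h)=\tau(v)$; for $k=1,\dots,|V|$: let $P_k$ be the vertex $v\in V\setminus\{P_1,\dots,P_{k-1}\}$ minimizing $\tau_k(v,\varphi_v)$ (ties broken by taking the $\preceq$-smallest); set $s_k=\tau_k(P_k,\varphi_{P_k})$; if $k<|V|$ set $\tau_{k+1}(v,h)=\tau_k(v,h)$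 if $v\in\{P_1,\dots,P_k\}$ or $v\not\sim P_k$, and $\tau_{k+1}(v,h)=\min(\tau_k(v,h),m_{v,\varphi_{P_k},s_k}(h))$ otherwise. Define $T^+(\varphi)_{P_k}=\varphi_{P_k}+s_k$ ($1\le k\le|V|$) and $T^-(\varphi)=2\varphi-T^+(\varphi)$. Each $\tau_k(v,\cdot)$ is right-differentiable with Lipschitz constant at most $1/2$; $\partial_2\tau_k$ denotes the right derivative in the second variable. $J^+(\varphi):=\prod_{k=1}^{|V|}(1+\partial_2\tau_k(P_k,\varphi_{P_k}))$, $J^-(\varphi):=\prod_{k=1}^{|V|}(1-\partial_2\tau_k(P_k,\varphi_{P_k}))$. $d_G$ is graph distance; $\tau'(v,k):=\max\{\tau(v)-\tau(w):d_G(v,w)\le k\}$; $L(\tau,\varepsilon):=\sup\{k\ge0:\tau'(v,k)\le\varepsilon/2\ \forall v\}-1$ (possibly $+\infty$). $\mathcal{E}(\varphi):=\{(v,w)\in E:|\varphi_v-\varphi_w|\ge1-\varepsilon\}$; $v\leftrightarrow w$ if connected by edges of $\mathcal{E}(\varphi)$ (including $v=w$); $r(\varphi,v):=\max\{d_G(v,w):v\leftrightarrow w\}$, $M(\varphi):=\max\{d_G(v,w):v\leftrightarrow w\}$. *)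

From Stdlib Require Import Reals ClassicalEpsilon.
From mathcomp Require Import all_boot.

Set Implicit Arguments.
Unset Strict Implicit.
Unset Printing Implicit Defensive.

Local Open Scope R_scope.

Definition is_rderiv (g : R -> R) (x l : R) : Prop :=
  forall e, 0 < e -> exists d, 0 < d /\
    forall h, 0 < h < d -> Rabs ((g (x + h) - g x) / h - l) < e.

(* the right derivative of g at x (chosen by classical choice; it is unique
   whenever it exists) *)
Definition rderiv (g : R -> R) (x : R) : R :=
  epsilon (inhabits 0) (is_rderiv g x).

Definition ftent (eps x : R) : R :=
  if Rle_dec 1 (Rabs x) then 0
  else if Rle_dec x (-1 + eps) then (1 + x) / eps
  else if Rle_dec x (1 - eps) then 1
  else (1 - x) / eps.

Section Addition.
Variables (V : finType) (adj : rel V) (tau : V -> R) (eps : R) (rk : V -> nat).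

Definition mfun (v : V) (h t h' : R) : R :=
  if Rle_dec t (tau v) then Rmin (tau v - t) (eps / 2) * ftent eps (h' - h) + t
  else t.

Definition better (g : V -> R) (v w : V) : bool :=
  if Rlt_dec (g v) (g w) then true
  else if Req_EM_T (g v) (g w) then (rk v <= rk w)%N else false.

Definition argminV (g : V -> R) (s : seq V) : option V :=
  foldl (fun acc v => match acc with
                      | None => Some v
                      | Some a => if better g v a then Some v else Some a
                      end) None s.

Variable phi : V -> R.

(* run of the addition algorithm: returns the list of pairs (P_k, tau_k), k = 1.. *)
Fixpoint run (fuel : nat) (chosen : seq V) (tk : V -> R -> R)
  : seq (V * (V -> R -> R)) :=
  match fuel with
  | 0 => [::]
  | n.+1 =>
    match argminV (fun v => tk v (phi v)) [seq v <- enum V | v \notin chosen] with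
    | None => [::]
    | Some P =>
      let s := tk P (phi P) in
      let chosen' := rcons chosen P in
      (P, tk) :: run n chosen'
        (fun v h => if (v \in chosen') || ~~ adj v P then tk v h
                    else Rmin (tk v h) (mfun v (phi P) s h))
    end
  end.

Definition alg_run : seq (V * (V -> R -> R)) :=
  run #|V| [::] (fun v _ => tau v).

Definition Jplus : R :=
  \big[Rmult/1]_(x <- alg_run) (1 + rderiv (x.2 x.1) (phi x.1)).
Definition Jminus : R :=
  \big[Rmult/1]_(x <- alg_run) (1 - rderiv (x.2 x.1) (phi x.1)).

End Addition.

Section Graph.
Variables (V : finType) (adj : rel V).

Fixpoint ball (k : nat) (v : V) : {set V} :=
  match k with
  | 0 => [set v]
  | k'.+1 => ball k' v :|: [set w | [exists u in ball k' v, adj u w]]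
  end.

(* graph distance d_G (for a connected graph) *)
Definition distG (v w : V) : nat :=
  find (fun k => w \in ball k v) (iota 0 #|V|).

Definition tau' (tau : V -> R) (v : V) (k : nat) : R :=
  \big[Rmax/0]_(w | w \in ball k v) (tau v - tau w).

Definition Erel (eps : R) (phi : V -> R) : rel V :=
  fun v w => adj v w && (if Rle_dec (1 - eps) (Rabs (phi v - phi w)) then true else false).

Definition linked (eps : R) (phi : V -> R) (v w : V) : bool :=
  connect (Erel eps phi) v w.

Definition rad (eps : R) (phi : V -> R) (v : V) : nat :=
  \max_(w | linked eps phi v w) distG v w.

Definition Mmax (eps : R) (phi : V -> R) : nat :=
  \max_(v : V) \max_(w | linked eps phi v w) distG v w.

End Graph.

From HB Require Import structures.
From Stdlib Require Import Reals Lra Lia ClassicalEpsilon.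
From mathcomp Require Import all_boot zify.

Set Implicit Arguments.
Unset Strict Implicit.
Local Open Scope R_scope.

(* Every vertex v not yet chosen keeps two invariants along the run: tau_k(v, .)
   is affine just to the right of phi_v, with a slope l such that |l| <= 1/2 and
   eps |l| <= tau'(v, 1 + max_{w~v} r(phi,w)); and tau_k(v, phi_v) >= tau(w) for
   some w in the E(phi)-cluster of v.  The tent added at a neighbour v of P_k has
   slope at most h/eps, and its height h = min(tau(v) - s_k, eps/2) is at most
   tau(v) - tau(w) for some w in the cluster of P_k, hence at distance at most
   1 + r(phi,P_k) from v.  Its value at phi_v is at least tau(w) if the edge
   v P_k is in E(phi) (the two clusters then merge), and at least tau(v)
   otherwise, since the tent is then at its top and tau'(v, M + 1) <= eps/2.
   Finally J^+ J^- = prod_k (1 - l_k^2) >= exp(-2 sum_k l_k^2) as l_k^2 <= 1/4,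
   and the P_k are distinct. *)

Definition rlinear (g : R -> R) (x l : R) : Prop :=
  exists d, 0 < d /\ forall h, 0 < h < d -> g (x + h) = g x + l * h.

Lemma rlinear_of_affine g x d a l : 0 < d ->
  (forall z, x <= z < x + d -> g z = a + l * z) -> rlinear g x l.
Proof.
move=> d_pos Hg; exists d; split=> // h Hh.
by rewrite !Hg; [ring | lra | lra].
Qed.

Lemma rlinear_scale_shift f x a c t l :
  rlinear f (x - a) l -> rlinear (fun y => c * f (y - a) + t) x (c * l).
Proof.
move=> [d [d_pos Hf]]; exists d; split=> // h Hh.
by rewrite (_ : x + h - a = x - a + h); [rewrite Hf //; ring | ring].
Qed.

Lemma rlinear_is_rderiv g x l : rlinear g x l -> is_rderiv g x l.
Proof.
move=> [d [d_pos Hd]] e e_pos; exists d; split=> // h Hh.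
rewrite Hd //; replace ((g x + l * h - g x) / h - l) with 0 by (field; lra).
by rewrite Rabs_R0.
Qed.

Lemma is_rderiv_unique g x l1 l2 : is_rderiv g x l1 -> is_rderiv g x l2 -> l1 = l2.
Proof.
move=> H1 H2; case: (Req_dec l1 l2) => // Hne.
have e_pos : 0 < Rabs (l1 - l2) / 2 by have := Rabs_pos_lt (l1 - l2); lra.
have [d1 [d1_pos Hd1]] := H1 _ e_pos; have [d2 [d2_pos Hd2]] := H2 _ e_pos.
pose h := Rmin d1 d2 / 2.
have := Rmin_pos _ _ d1_pos d2_pos; have := Rmin_l d1 d2; have := Rmin_r d1 d2 => *.
have [h_d1 h_d2] : 0 < h < d1 /\ 0 < h < d2 by rewrite /h; lra.
have A := Hd1 h h_d1; have B := Hd2 h h_d2.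
set q := (g (x + h) - g x) / h in A B.
have := Rabs_triang (l1 - q) (q - l2); replace (l1 - q + (q - l2)) with (l1 - l2) by ring.
rewrite Rabs_minus_sym in A; lra.
Qed.

Lemma rderiv_rlinear g x l : rlinear g x l -> rderiv g x = l.
Proof.
move=> /rlinear_is_rderiv Hl.
apply: (is_rderiv_unique _ Hl).
exact: epsilon_spec (inhabits 0) (is_rderiv g x) (ex_intro _ l Hl).
Qed.

Lemma rlinear_const c x : rlinear (fun _ => c) x 0.
Proof. by exists 1; split=> [|h _]; [lra | ring]. Qed.

Lemma rlinear_min_lt g1 g2 x l1 l2 : g1 x < g2 x ->
  rlinear g1 x l1 -> rlinear g2 x l2 -> rlinear (fun y => Rmin (g1 y) (g2 y)) x l1.
Proof.
move=> Hlt [d1 [d1_pos Hg1]] [d2 [d2_pos Hg2]].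
pose a := Rabs (l1 - l2) + 1.
have a_pos : 0 < a by have := Rabs_pos (l1 - l2); rewrite /a; lra.
(* below [D] the gap [g2 x - g1 x] cannot be closed by the slope difference *)
pose D := (g2 x - g1 x) / a.
have Da : D * a = g2 x - g1 x by rewrite /D; field; lra.
exists (Rmin (Rmin d1 d2) D); split.
  by apply: Rmin_pos; [apply: Rmin_pos | apply: Rdiv_lt_0_compat; lra].
move=> h Hh.
have := Rmin_l (Rmin d1 d2) D; have := Rmin_r (Rmin d1 d2) D.
have := Rmin_l d1 d2; have := Rmin_r d1 d2 => *.
rewrite Hg1 ?Hg2; try lra.
have ha : h * a < D * a by apply: Rmult_lt_compat_r; lra.
have hl : (l1 - l2) * h < h * a.
  by have := Rle_abs (l1 - l2); rewrite /a; nra.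
by rewrite Rmin_left ?Rmin_left; lra.
Qed.

Lemma rlinear_min_eq g1 g2 x l1 l2 : g1 x = g2 x ->
  rlinear g1 x l1 -> rlinear g2 x l2 ->
  rlinear (fun y => Rmin (g1 y) (g2 y)) x (Rmin l1 l2).
Proof.
move=> Heq [d1 [d1_pos Hg1]] [d2 [d2_pos Hg2]].
exists (Rmin d1 d2); split=> [|h Hh]; first exact: Rmin_pos.
have := Rmin_l d1 d2; have := Rmin_r d1 d2 => *.
rewrite Hg1 ?Hg2 -?Heq; try lra.
by rewrite /Rmin; repeat case: Rle_dec => ?; nra.
Qed.

Lemma rlinear_min g1 g2 x l1 l2 : rlinear g1 x l1 -> rlinear g2 x l2 ->
  rlinear (fun y => Rmin (g1 y) (g2 y)) x l1 \/
  rlinear (fun y => Rmin (g1 y) (g2 y)) x l2.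
Proof.
move=> H1 H2.
case: (Rtotal_order (g1 x) (g2 x)) => [Hlt|[Heq|Hgt]].
- left; exact: rlinear_min_lt Hlt H1 H2.
- have H := rlinear_min_eq Heq H1 H2.
  case: (Rle_dec l1 l2) => Hl; [left; rewrite -(Rmin_left l1 l2) |
                                right; rewrite -(Rmin_right l1 l2)] => //; lra.
- right; have [d [d_pos Hd]] := rlinear_min_lt Hgt H2 H1.
  by exists d; split=> // h Hh; rewrite Rmin_comm (Rmin_comm (g1 x)); apply: Hd.
Qed.

Section Tent.
Variable eps : R.
Hypotheses (eps_pos : 0 < eps) (eps_le : eps <= 1 / 2).

Lemma ftent_out z : 1 <= Rabs z -> ftent eps z = 0.
Proof. by rewrite /ftent; case: Rle_dec. Qed.

Lemma ftent_left z : -1 <= z <= -1 + eps -> ftent eps z = (1 + z) / eps.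
Proof.
move=> Hz; rewrite /ftent; case: Rle_dec => /= Hout.
  have -> : z = -1 by split_Rabs; lra.
  field; lra.
by case: Rle_dec => // ?; exfalso; lra.
Qed.

Lemma ftent_mid z : -1 + eps <= z <= 1 - eps -> ftent eps z = 1.
Proof.
move=> Hz; rewrite /ftent; case: Rle_dec => /= Hout; first by split_Rabs; lra.
case: Rle_dec => /= Hl.
  have -> : z = -1 + eps by lra.
  field; lra.
by case: Rle_dec => // ?; exfalso; lra.
Qed.

Lemma ftent_right z : 1 - eps <= z <= 1 -> ftent eps z = (1 - z) / eps.
Proof.
move=> Hz; rewrite /ftent; case: Rle_dec => /= Hout.
  have -> : z = 1 by split_Rabs; lra.
  field; lra.
case: Rle_dec => /= Hl; first by exfalso; lra.
case: Rle_dec => //= Hm.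
have -> : z = 1 - eps by lra.
field; lra.
Qed.

Lemma ftent_ge0 z : 0 <= ftent eps z.
Proof.
have inv_pos : 0 < / eps by apply: Rinv_0_lt_compat.
rewrite /ftent; case: Rle_dec => /= Hout; first lra.
case: Rle_dec => /= Hl; first by apply: Rmult_le_pos; split_Rabs; lra.
case: Rle_dec => /= Hm; first lra.
by apply: Rmult_le_pos; split_Rabs; lra.
Qed.

Lemma ftent_rlinear y : exists2 l, rlinear (ftent eps) y l & Rabs l <= 1 / eps.
Proof.
have inv_pos : 0 < 1 / eps by apply: Rdiv_lt_0_compat; lra.
have abs0 : Rabs 0 <= 1 / eps by rewrite Rabs_R0; lra.
case: (Rlt_le_dec y (-1)) => Hy1.
  exists 0 => //; apply: (@rlinear_of_affine _ _ (-1 - y) 0); first lra.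
  by move=> z Hz; rewrite ftent_out; [ring | split_Rabs; lra].
case: (Rlt_le_dec y (-1 + eps)) => Hy2.
  exists (1 / eps); last by rewrite Rabs_right; lra.
  apply: (@rlinear_of_affine _ _ (-1 + eps - y) (1 / eps)); first lra.
  by move=> z Hz; rewrite ftent_left; [field; lra | lra].
case: (Rlt_le_dec y (1 - eps)) => Hy3.
  exists 0 => //; apply: (@rlinear_of_affine _ _ (1 - eps - y) 1); first lra.
  by move=> z Hz; rewrite ftent_mid; [ring | lra].
case: (Rlt_le_dec y 1) => Hy4.
  exists (- (1 / eps)); last by rewrite Rabs_Ropp Rabs_right; lra.
  apply: (@rlinear_of_affine _ _ (1 - y) (1 / eps)); first lra.
  by move=> z Hz; rewrite ftent_right; [field; lra | lra].
exists 0 => //; apply: (@rlinear_of_affine _ _ 1 0); first lra.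
by move=> z Hz; rewrite ftent_out; [ring | split_Rabs; lra].
Qed.

End Tent.

Section Balls.
Variables (V : finType) (adj : rel V).

Lemma ballS k v w : w \in ball adj k v -> w \in ball adj k.+1 v.
Proof. by move=> Hw /=; rewrite inE Hw. Qed.

Lemma ball_le k k' v w : (k <= k')%N -> w \in ball adj k v -> w \in ball adj k' v.
Proof.
move=> /subnK <-; elim: (k' - k)%N => [|n IH] //= Hw.
by apply: ballS; apply: IH.
Qed.

Lemma ball_adj k u v w : adj v u -> w \in ball adj k u -> w \in ball adj k.+1 v.
Proof.
move=> Hvu; elim: k w => [|k IH] w /=.
  rewrite !inE => /eqP ->; apply/orP; right.
  by apply/existsP; exists v; rewrite inE eqxx Hvu.
rewrite inE => /orP [Hw|]; first by rewrite inE IH.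
rewrite inE => /existsP [x /andP [Hx Hxw]].
by rewrite inE; apply/orP; right; rewrite inE; apply/existsP; exists x; rewrite IH.
Qed.

Lemma path_last_ball p x : path adj x p -> last x p \in ball adj (size p) x.
Proof.
elim: p x => [|y p IH] x /=; first by rewrite inE.
by move=> /andP [Hxy Hp]; apply: ball_adj Hxy (IH _ Hp).
Qed.

Hypothesis adj_conn : forall v w : V, connect adj v w.

Lemma ball_card v w : exists2 n, (n < #|V|)%N & w \in ball adj n v.
Proof.
have /connectP [p Hp ->] := adj_conn v w.
case: (shortenP Hp) => q Hq Hu _.
exists (size q); last exact: path_last_ball.
by have := max_card (mem (v :: q)); rewrite (card_uniqP Hu).
Qed.

Lemma distG_ball v w : w \in ball adj (distG adj v w) v.
Proof.
have [n Hn Hw] := ball_card v w.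
have Hhas : has (fun k => w \in ball adj k v) (iota 0 #|V|).
  by apply/hasP; exists n; rewrite // mem_iota.
have := nth_find 0%N Hhas; rewrite /distG.
by move: Hhas; rewrite has_find size_iota => Hlt; rewrite nth_iota.
Qed.

End Balls.

Lemma bigRmax_ge0 (I : Type) (r : seq I) (P : pred I) (F : I -> R) :
  0 <= \big[Rmax/0]_(i <- r | P i) F i.
Proof.
elim: r => [|x r IH]; first by rewrite big_nil; lra.
by rewrite big_cons; case: (P x) => //; apply: Rle_trans (Rmax_r _ _).
Qed.

Lemma bigRmax_ge (I : eqType) (r : seq I) (P : pred I) (F : I -> R) i :
  i \in r -> P i -> F i <= \big[Rmax/0]_(j <- r | P j) F j.
Proof.
elim: r => [|x r IH] //; rewrite inE big_cons => /orP [/eqP <- -> | Hi Pi].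
  exact: Rmax_l.
by case: (P x); [apply: Rle_trans (Rmax_r _ _) |]; apply: IH.
Qed.

Lemma tau'_ge0 (V : finType) (adj : rel V) tau v k : 0 <= tau' adj tau v k.
Proof. exact: bigRmax_ge0. Qed.

Lemma tau'_ge (V : finType) (adj : rel V) tau v k w :
  w \in ball adj k v -> tau v - tau w <= tau' adj tau v k.
Proof. by move=> Hw; apply: bigRmax_ge; rewrite ?mem_index_enum. Qed.

HB.instance Definition _ := Monoid.isComLaw.Build R 0 Rplus
  (fun a b c => esym (Rplus_assoc a b c)) Rplus_comm Rplus_0_l.

Lemma big_Rplus_le (T : Type) (s : seq T) (f g : T -> R) :
  (forall x, List.In x s -> f x <= g x) ->
  \big[Rplus/0]_(x <- s) f x <= \big[Rplus/0]_(x <- s) g x.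
Proof.
elim: s => [|x s IH] Hfg; first by rewrite !big_nil; lra.
rewrite !big_cons; apply: Rplus_le_compat; first by apply: Hfg; left.
by apply: IH => y Hy; apply: Hfg; right.
Qed.

Lemma big_Rplus_scale (T : Type) (s : seq T) (f : T -> R) c :
  \big[Rplus/0]_(x <- s) (c * f x) = c * \big[Rplus/0]_(x <- s) f x.
Proof. by rewrite (big_morph (fun y => c * y) (Rmult_plus_distr_l c) (Rmult_0_r c)). Qed.

Lemma big_Rplus_uniq_le (V : finType) (s : seq V) (F : V -> R) :
  uniq s -> (forall v, 0 <= F v) ->
  \big[Rplus/0]_(v <- s) F v <= \big[Rplus/0]_(v : V) F v.
Proof.
move=> Hu HF; rewrite big_uniq // (bigID (fun v => v \in s) predT) /=.
rewrite -[X in X <= _]Rplus_0_r; apply: Rplus_le_compat_l.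
by apply: (big_ind (fun y => 0 <= y)) => [|x y ? ?|v _]; [lra | lra | apply: HF].
Qed.

Lemma exp_neg2_le_1_minus u : 0 <= u <= 1 / 4 -> exp (-2 * u) <= 1 - u.
Proof.
move=> Hu.
have Hexp := exp_ineq1_le (2 * u).
have exp_pos2 := exp_pos (2 * u).
rewrite (_ : -2 * u = - (2 * u)); last ring.
rewrite exp_Ropp; apply: (Rmult_le_reg_r (exp (2 * u))) => //.
by rewrite Rinv_l; nra.
Qed.

Lemma exp_sum_sq_le_prod (T : Type) (s : seq T) (d : T -> R) :
  (forall x, List.In x s -> Rabs (d x) <= 1 / 2) ->
  exp (-2 * \big[Rplus/0]_(x <- s) d x ^ 2) <=
  \big[Rmult/1]_(x <- s) (1 + d x) * \big[Rmult/1]_(x <- s) (1 - d x).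
Proof.
elim: s => [|x s IH] Hd; first by rewrite !big_nil Rmult_0_r exp_0; lra.
rewrite !big_cons Rmult_plus_distr_l exp_plus.
have Hx : 0 <= d x ^ 2 <= 1 / 4.
  split; first exact: pow2_ge_0.
  have := Hd x (or_introl erefl); rewrite -(pow2_abs (d x)); have := Rabs_pos (d x); nra.
have IHs := IH (fun y Hy => Hd y (or_intror Hy)).
have := exp_pos (-2 * d x ^ 2); have := exp_pos (-2 * \big[Rplus/0]_(y <- s) d y ^ 2).
have := exp_neg2_le_1_minus Hx => *.
rewrite (_ : _ * _ * (_ * _) = (1 - d x ^ 2) * (\big[Rmult/1]_(y <- s) (1 + d y) *
                                                 \big[Rmult/1]_(y <- s) (1 - d y))); last ring.
by apply: Rmult_le_compat; lra.
Qed.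

Lemma exp_le_sqrt a y : exp (2 * a) <= y -> exp a <= sqrt y.
Proof.
move=> Hy; rewrite -(sqrt_pow2 (exp a)); last exact/Rlt_le/exp_pos.
by apply: sqrt_le_1_alt; rewrite /= Rmult_1_r -exp_plus Rplus_diag.
Qed.

Section Run.
Variables (V : finType) (adj : rel V).
Hypothesis adj_conn : forall v w : V, connect adj v w.
Variables (tau : V -> R) (eps : R).
Hypotheses (eps_pos : 0 < eps) (eps_le : eps <= 1 / 2).
Variables (rk : V -> nat) (phi : V -> R) (k : nat).
Hypothesis Mmax_lt_k : (Mmax adj eps phi + 1 <= k)%N.
Hypothesis tau'_k_le : forall v, tau' adj tau v k <= eps / 2.

Definition nbhd_rad (v : V) : nat := (1 + \max_(w | adj v w) rad adj eps phi w)%N.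

Definition cluster_below (tk : V -> R -> R) (v : V) : Prop :=
  exists2 w, linked adj eps phi v w & tau w <= tk v (phi v).

Definition tame_slope (tk : V -> R -> R) (v : V) : Prop :=
  exists l, [/\ rlinear (tk v) (phi v) l, Rabs l <= 1 / 2
              & Rabs l * eps <= tau' adj tau v (nbhd_rad v)].

Lemma linked_long_edge v P w : adj v P -> 1 - eps <= Rabs (phi v - phi P) ->
  linked adj eps phi P w -> linked adj eps phi v w.
Proof.
move=> HvP Hlong; apply: connect_trans; apply: connect1.
by rewrite /Erel HvP; case: Rle_dec.
Qed.

Lemma cluster_in_balls v P w : adj v P -> linked adj eps phi P w ->
  w \in ball adj (nbhd_rad v) v /\ w \in ball adj k v.
Proof.
move=> HvP HPw.
have Hw : w \in ball adj (distG adj P w).+1 v := ball_adj HvP (distG_ball adj_conn P w).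
have dist_rad : (distG adj P w <= rad adj eps phi P)%N.
  exact: (@leq_bigmax_cond _ (linked adj eps phi P)).
have rad_nbhd : (rad adj eps phi P <= \max_(u | adj v u) rad adj eps phi u)%N.
  exact: (@leq_bigmax_cond _ (adj v)).
have rad_Mmax : (rad adj eps phi P <= Mmax adj eps phi)%N.
  exact: (@leq_bigmax _ (rad adj eps phi)).
by split; apply: ball_le Hw; rewrite /nbhd_rad; lia.
Qed.

Lemma mfun_tame_slope v P w s : adj v P -> linked adj eps phi P w -> tau w <= s ->
  tame_slope (fun u => mfun tau eps u (phi P) s) v.
Proof.
move=> HvP HPw Hws.
have tau'_pos := tau'_ge0 adj tau v (nbhd_rad v).
rewrite /tame_slope /mfun; case: Rle_dec => /= Hs; last first.
  exists 0; split; rewrite ?Rabs_R0; try lra.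
  by apply: (@rlinear_of_affine _ _ 1 s); [lra | move=> *; ring].
pose c := Rmin (tau v - s) (eps / 2).
have c_pos : 0 <= c by apply: Rmin_glb; lra.
have [lf Hlf lf_le] := ftent_rlinear eps_pos eps_le (phi v - phi P).
have c_le : c <= tau v - tau w.
  by have := Rmin_l (tau v - s) (eps / 2); rewrite -/c; lra.
have Hc_lf : c * Rabs lf <= c / eps.
  by rewrite /Rdiv -(Rmult_1_l (/ eps)); apply: Rmult_le_compat_l.
have c_eps : c / eps * eps = c by field; lra.
have := Rmin_r (tau v - s) (eps / 2); rewrite -/c => c_le_eps.
have [Hball _] := cluster_in_balls HvP HPw.
have := tau'_ge tau Hball => Htau.
exists (c * lf); split; first exact: rlinear_scale_shift.
all: rewrite Rabs_mult (Rabs_pos_eq c) //.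
- have : c / eps <= 1 / 2 by apply: (Rmult_le_reg_r eps) => //; lra.
  lra.
- have := Rmult_le_compat_r eps _ _ (Rlt_le _ _ eps_pos) Hc_lf; lra.
Qed.

Lemma mfun_cluster_below v P w s : adj v P -> linked adj eps phi P w -> tau w <= s ->
  cluster_below (fun u => mfun tau eps u (phi P) s) v.
Proof.
move=> HvP HPw Hws.
have linked_vv : linked adj eps phi v v by exact: connect0.
rewrite /cluster_below /mfun; case: Rle_dec => /= Hs; last by exists v => //; lra.
have c_pos : 0 <= Rmin (tau v - s) (eps / 2) by apply: Rmin_glb; lra.
case: (Rle_dec (1 - eps) (Rabs (phi v - phi P))) => Hlong.
  exists w; first exact: linked_long_edge Hlong HPw.
  by have := ftent_ge0 eps_pos (phi v - phi P); nra.
(* across a short edge the tent is at its top, which is at least tau v *)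
exists v => //; rewrite ftent_mid //; last by split_Rabs; lra.
have [_ Hball] := cluster_in_balls HvP HPw.
have := tau'_ge tau Hball; have := tau'_k_le v.
by rewrite /Rmin; case: Rle_dec => /= ?; lra.
Qed.

Definition tau_next (chosen : seq V) (tk : V -> R -> R) (P : V) : V -> R -> R :=
  fun v h => if (v \in rcons chosen P) || ~~ adj v P then tk v h
             else Rmin (tk v h) (mfun tau eps v (phi P) (tk P (phi P)) h).

Definition run_invariant (chosen : seq V) (tk : V -> R -> R) : Prop :=
  forall v, v \notin chosen -> cluster_below tk v /\ tame_slope tk v.

Lemma run_invariant_next chosen tk P : run_invariant chosen tk -> P \notin chosen ->
  run_invariant (rcons chosen P) (tau_next chosen tk P).
Proof.
move=> Hinv HP v Hv.
have Hv' : v \notin chosen by move: Hv; rewrite mem_rcons inE negb_or => /andP [].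
rewrite /cluster_below /tame_slope /tau_next (negbTE Hv) /=.
have [[w1 Hw1 Hw1_le] [l1 [Hl1 Hl1_half Hl1_tau]]] := Hinv v Hv'.
case HvP: (adj v P) => /=; last by split; [exists w1 | exists l1].
have [[w HPw Hw] _] := Hinv P HP.
split.
  have [w2 Hw2 Hw2_le] := mfun_cluster_below HvP HPw Hw.
  by rewrite /Rmin; case: Rle_dec => /= _; [exists w1 | exists w2].
have [l2 [Hl2 Hl2_half Hl2_tau]] := mfun_tame_slope HvP HPw Hw.
by case: (rlinear_min Hl1 Hl2) => H; [exists l1 | exists l2].
Qed.

Lemma argminV_mem g s P : argminV rk g s = Some P -> P \in s.
Proof.
rewrite /argminV; set F := fun acc v => _.
suff foldl_mem s' acc : foldl F acc s' = Some P -> acc = Some P \/ P \in s'.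
  by case/foldl_mem.
elim: s' acc => [|x s' IH] acc /=; first by left.
move=> /IH [|Hs']; last by right; rewrite inE Hs' orbT.
rewrite /F; case: acc => [a|] /=; last by case=> ->; right; rewrite inE eqxx.
by case: ifP => _ [->]; [right; rewrite inE eqxx | left].
Qed.

Lemma run_spec n chosen tk : run_invariant chosen tk ->
  (forall x, List.In x (run adj tau eps rk phi n chosen tk) -> tame_slope x.2 x.1) /\
  all (fun v => v \notin chosen) (map fst (run adj tau eps rk phi n chosen tk)) /\
  uniq (map fst (run adj tau eps rk phi n chosen tk)).
Proof.
elim: n chosen tk => [|n IH] chosen tk Hinv //=.
case E: argminV => [P|] //=.
have HP : P \notin chosen by move: (argminV_mem E); rewrite mem_filter => /andP [].
rewrite -/(tau_next chosen tk P).
have [IH_tame [IH_fresh IH_uniq]] := IH _ _ (run_invariant_next Hinv HP).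
split; first by move=> x [<-|]; [have [] := Hinv P HP | apply: IH_tame].
have fresh_P : forall v, v \notin rcons chosen P -> (v \notin chosen) && (v != P).
  by move=> v; rewrite mem_rcons inE negb_or andbC.
rewrite HP IH_uniq andbT /=; split.
  by apply: sub_all IH_fresh => v /fresh_P /andP [].
by apply/negP => /(allP IH_fresh) /fresh_P /andP [_ /eqP].
Qed.

Lemma alg_run_spec :
  (forall x, List.In x (alg_run adj tau eps rk phi) -> tame_slope x.2 x.1) /\
  uniq (map fst (alg_run adj tau eps rk phi)).
Proof.
have Hinv0 : run_invariant [::] (fun v _ => tau v).
  move=> v _; split; first by exists v; [exact: connect0 | lra].
  exists 0; rewrite Rabs_R0 Rmult_0_l; split; [exact: rlinear_const | lra | exact: tau'_ge0].
by have [? [_ ?]] := run_spec #|V| Hinv0.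
Qed.

Lemma sum_sq_rderiv_le :
  \big[Rplus/0]_(x <- alg_run adj tau eps rk phi) rderiv (x.2 x.1) (phi x.1) ^ 2 <=
  1 / eps ^ 2 * \big[Rplus/0]_(v : V) tau' adj tau v (nbhd_rad v) ^ 2.
Proof.
have [Htame Huniq] := alg_run_spec.
have eps2_pos : 0 < eps ^ 2 by apply: pow_lt.
pose T v := 1 / eps ^ 2 * tau' adj tau v (nbhd_rad v) ^ 2.
rewrite -big_Rplus_scale -/(T _).
apply: Rle_trans (big_Rplus_le (g := fun x => T x.1) _) _.
  move=> x /Htame [l [Hl _ Hl_tau]]; rewrite (rderiv_rlinear Hl).
  have Habs : 0 <= Rabs l * eps by apply: Rmult_le_pos; [apply: Rabs_pos | lra].
  have := pow_incr _ _ 2 (conj Habs Hl_tau).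
  rewrite Rpow_mult_distr pow2_abs /T => Hsq.
  apply: (Rmult_le_reg_r (eps ^ 2)) => //.
  by rewrite (_ : _ * _ * eps ^ 2 = tau' adj tau x.1 (nbhd_rad x.1) ^ 2); [| field; lra].
rewrite -(big_map fst xpredT T).
apply: big_Rplus_uniq_le => // v; apply: Rmult_le_pos; last exact: pow2_ge_0.
by apply: Rlt_le; apply: Rdiv_lt_0_compat; lra.
Qed.

Lemma sqrt_J_ge :
  exp (- (1 / eps ^ 2) * \big[Rplus/0]_(v : V) tau' adj tau v (nbhd_rad v) ^ 2) <=
  sqrt (Jplus adj tau eps rk phi * Jminus adj tau eps rk phi).
Proof.
have [Htame _] := alg_run_spec.
apply: exp_le_sqrt; apply: Rle_trans (exp_sum_sq_le_prod _); last first.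
  by move=> x /Htame [l [Hl Hl_half _]]; rewrite (rderiv_rlinear Hl).
have := sum_sq_rderiv_le.
set S := \big[Rplus/0]_(x <- _) _; set Q := 1 / eps ^ 2 * _ => HSQ.
have : 2 * (- (1 / eps ^ 2) * \big[Rplus/0]_(v : V) tau' adj tau v (nbhd_rad v) ^ 2)
       <= -2 * S by rewrite /Q in HSQ; lra.
by case/Rle_lt_or_eq_dec => [Hlt | ->]; [apply: Rlt_le; apply: exp_increasing | apply: Rle_refl].
Qed.

End Run.

Theorem lemma2p7
  (V : finType) (adj : rel V)
  (adj_sym : symmetric adj) (adj_irrefl : irreflexive adj)
  (adj_conn : forall v w : V, connect adj v w)
  (tau : V -> R) (tau_nonneg : forall v, 0 <= tau v)
  (eps : R) (eps_pos : 0 < eps) (eps_le : eps <= 1 / 2)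
  (rk : V -> nat) (rk_inj : injective rk)
  (phi : V -> R)
  (HL : exists k : nat, (Mmax adj eps phi + 1 <= k)%N /\
                        forall v, tau' adj tau v k <= eps / 2) :
  sqrt (Jplus adj tau eps rk phi * Jminus adj tau eps rk phi) >=
  exp (- (1 / eps ^ 2) *
       \big[Rplus/0]_(v : V)
         (tau' adj tau v (1 + \max_(w | adj v w) rad adj eps phi w)%N) ^ 2).
Proof.
have [k [Hk Htau']] := HL.
exact/Rle_ge/(sqrt_J_ge adj_conn eps_pos eps_le rk Hk Htau').
Qed.
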